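(* Let $X$ be a uniformly convex, uniformly smooth real Banach space with normalized duality map $J$ and inverse $J^{-1}:X^*\to X$. Let $a,b\in S^*$ with $b\notin\{a,-a\}$, let $\delta(a,b)$ be the meridian arc between $a$ and $b$, and let $W(a,b)$ be the wedge engendered by it. Then $$W(a,b)^\circ=\bigcup_{c\in\delta(a,b)}\{tJ^{-1}c:t\ge 0\}=\operatorname{cone}\big(J^{-1}(\delta(a,b))\big).$$
   Context: $X^*$ is the norm dual of $X$ with pairing $\langle\cdot,\cdot\rangle$, and $S^*=\{c\in X^*:\|c\|_{X^*}=1\}$. The normalized duality map $J:X\to X^*$ is defined by $\langle Jx,x\rangle=\|Jx\|_{X^*}\|x\|=\|x\|^2=\|Jx\|_{X^*}^2$; it is a homogeneous homeomorphism. For $a,b\in S^*$ with $b\notin\{a,-a\}$, the meridian arc is $\delta(a,b)=\{(\lambda a+\mu b)/\|\lambda a+\mu b\|_{X^*}:\lambda,\mu\ge 0,\ (\lambda,\mu)\neq(0,0)\}$, i.e. the arc of $\operatorname{span}\{a,b\}\cap S^*$ joining $a$ and $b$ containing no pair of diametrically opposite points. The wedge engendered by $\delta(a,b)$ is the closed convex cone $W(a,b)=\{x\in X:\langle c,x\rangle\le 0 \text{ for all } c\in\delta(a,b)\}$. For a set $A$, $\operatorname{cone}A=\{ta:t\ge 0,a\in A\}$. The polar of a closed convex cone $K$ is $K^\circ=\{x\in X:P_Kx=0\}$, where $P_K x=\operatorname{argmin}\{\|x-k\|:k\in K\}$ is the metric projection. *)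

From HB Require Import structures.
From mathcomp Require Import all_boot all_order all_algebra.
From mathcomp Require Import all_classical all_reals all_analysis.
Set Implicit Arguments. Unset Strict Implicit. Unset Printing Implicit Defensive.
Import Order.TTheory GRing.Theory Num.Theory.
Import numFieldNormedType.Exports.
Local Open Scope classical_set_scope.
Local Open Scope ring_scope.

Section Banach.
Variables (R : realType) (X : completeNormedModType R).

Definition is_dual (f : X -> R) : Prop :=
  [/\ forall x y : X, f (x + y) = f x + f y,
      forall (r : R) (x : X), f (r *: x) = r * f x
    & continuous f].

Definition dnorm (f : X -> R) : R :=
  sup [set `|f x| | x in [set x : X | `|x| <= 1]].

Definition dual_sphere : set (X -> R) := [set c | is_dual c /\ dnorm c = 1].

Definition uniformly_convex : Prop :=
  forall eps : R, 0 < eps <= 2 -> exists2 delta : R, 0 < delta &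
    forall x y : X, `|x| <= 1 -> `|y| <= 1 -> eps <= `|x - y| ->
      `|(2 : R)^-1 *: (x + y)| <= 1 - delta.

Definition smooth_modulus (t : R) : R :=
  sup [set (`|p.1 + p.2| + `|p.1 - p.2|) / 2 - 1
       | p in [set p : X * X | `|p.1| = 1 /\ `|p.2| = t]].

Definition uniformly_smooth : Prop :=
  (fun t : R => smooth_modulus t / t) @ 0^'+ --> (0 : R).

(* Normalized duality relation: c = J x, i.e.
   <c,x> = |c|_* |x| = |x|^2 = |c|_*^2, with c in X^*. *)
Definition duality (x : X) (c : X -> R) : Prop :=
  [/\ is_dual c, c x = dnorm c * `|x|, dnorm c * `|x| = `|x| ^+ 2
    & `|x| ^+ 2 = dnorm c ^+ 2].

(* J^{-1} c as a set: the (unique, in our setting) x with J x = c. *)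
Definition Jinv_set (c : X -> R) : set X := [set x | duality x c].

Definition meridian_arc (a b : X -> R) : set (X -> R) :=
  [set c | exists lam mu : R, [/\ 0 <= lam, 0 <= mu, (lam, mu) != (0, 0) &
     c = (fun x => (lam * a x + mu * b x) / dnorm (fun y => lam * a y + mu * b y))]].

Definition wedge (a b : X -> R) : set X :=
  [set x | forall c, meridian_arc a b c -> c x <= 0].

Definition cone (A : set X) : set X := [set z | exists t : R, exists y : X, [/\ 0 <= t, A y & z = t *: y]].

Definition metric_proj (K : set X) (x : X) : set X :=
  [set k | K k /\ forall k', K k' -> `|x - k| <= `|x - k'|].

Definition polar (K : set X) : set X := [set x | metric_proj K x = [set 0]].

End Banach.

From HB Require Import structures.
From mathcomp Require Import all_boot all_order all_algebra.
From mathcomp Require Import all_classical all_reals all_analysis.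
From mathcomp Require Import ring lra.
Import Order.TTheory GRing.Theory Num.Theory.
Import numFieldNormedType.Exports.
Local Open Scope classical_set_scope.
Local Open Scope ring_scope.
Set Implicit Arguments. Unset Strict Implicit. Unset Printing Implicit Defensive.

(** If [x = t J^{-1} c] with [c] on the arc and [J y = c], then for every [k]
    in the wedge [t |y|^2 = c x <= c (x - k) <= |y| |x - k|], so [0] is a
    nearest point of the wedge to [x], and the only one by strict convexity.
    Conversely, if [0] is the metric projection of [x <> 0], the one-sided
    derivative [p] of the norm at [x], which uniform smoothness makes linear,
    is [<= 0] on the wedge; a two-functional Farkas lemma writes
    [p = lam a + mu b] with [lam, mu >= 0], and [p] has norm 1 and satisfies
    [p x = |x|], so [p] lies on the arc and [p = J (x / |x|)]. For [x = 0]
    one only needs [J^{-1} a], which exists because a uniformly convex space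
    makes every functional attain its norm. *)

Section Banach.
Variables (R : realType) (X : completeNormedModType R).
Implicit Types (f g a b c p : X -> R) (x y z k h u v w : X).

Lemma dualD f x y : is_dual f -> f (x + y) = f x + f y.
Proof. by case=> ->. Qed.

Lemma dualZ f (r : R) x : is_dual f -> f (r *: x) = r * f x.
Proof. by case=> _ ->. Qed.

Lemma dual0 f : is_dual f -> f 0 = 0.
Proof. by move=> hf; rewrite -(scale0r (0 : X)) dualZ // mul0r. Qed.

Lemma dualN f x : is_dual f -> f (- x) = - f x.
Proof. by move=> hf; rewrite -scaleN1r dualZ // mulN1r. Qed.

Lemma dualB f x y : is_dual f -> f (x - y) = f x - f y.
Proof. by move=> hf; rewrite dualD // dualN. Qed.

Lemma is_dual_comb f g (al be ga : R) : is_dual f -> is_dual g ->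
  is_dual (fun x => (al * f x + be * g x) * ga).
Proof.
move=> [fD fZ fc] [gD gZ gc]; split.
- by move=> x y; rewrite fD gD; ring.
- by move=> r x; rewrite fZ gZ; ring.
- move=> x; apply: cvgM; last exact: cvg_cst.
  by apply: cvgD; (apply: cvgM; first exact: cvg_cst); [exact: fc | exact: gc].
Qed.

Lemma is_dual_scale f (s : R) : is_dual f -> is_dual (fun x => s * f x).
Proof.
move=> [fD fZ fc]; split.
- by move=> x y; rewrite fD; ring.
- by move=> r x; rewrite fZ; ring.
- by move=> x; apply: cvgM; [exact: cvg_cst | exact: fc].
Qed.

Lemma dual_bounded f : is_dual f ->
  exists2 M, 0 < M & forall z, `|f z| <= M * `|z|.
Proof.
move=> hf; case: (hf) => _ _ /(_ 0).
move=> /cvgr_dist_lt /(_ _ ltr01) /nbhs_norm0P [e e0 he].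
exists (2 / e); first by rewrite divr_gt0.
move=> z; have [->|z0] := eqVneq z 0.
  by rewrite dual0 // normr0 mulr_ge0 // divr_ge0 // ltW.
have nz : 0 < `|z| by rewrite normr_gt0.
have k0 : 0 < e / 2 / `|z| by rewrite !divr_gt0.
have e2 : e / 2 < e by rewrite ltr_pdivrMr // ltr_pMr // ltr1n.
move: (he ((e / 2 / `|z|) *: z)).
rewrite /= normrZ (gtr0_norm k0) divfK ?gt_eqF // => /(_ e2).
rewrite dual0 // sub0r normrN dualZ // normrM (gtr0_norm k0) => h; apply/ltW.
have -> : 2 / e * `|z| = (e / 2 / `|z|)^-1 * 1 by field; rewrite gt_eqF //= gt_eqF.
by rewrite ltr_pdivlMl.
Qed.

Definition dnorm_set f := [set `|f x| | x in [set x : X | `|x| <= 1]].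

Lemma dnorm_set_ubound f : is_dual f -> has_ubound (dnorm_set f).
Proof.
move=> /dual_bounded [M M0 hM]; exists M => _ [x /= hx <-].
by apply: le_trans (hM x) _; rewrite ler_piMr // ltW.
Qed.

Lemma dnorm_ge0 f : 0 <= dnorm f.
Proof.
have [ub|nub] := pselect (has_ubound (dnorm_set f)); last by rewrite /dnorm sup_out // => -[].
apply: le_trans (normr_ge0 (f 0)) (ub_le_sup ub _).
by exists 0 => //=; rewrite normr0.
Qed.

Lemma dual_normr_le f z : is_dual f -> `|f z| <= dnorm f * `|z|.
Proof.
move=> hf; have [->|z0] := eqVneq z 0.
  by rewrite dual0 // normr0 mulr_ge0 // dnorm_ge0.
have nz : 0 < `|z| by rewrite normr_gt0.
have nz' : 0 <= `|z|^-1 by rewrite invr_ge0 ltW.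
have : `|f (`|z|^-1 *: z)| <= dnorm f.
  apply: (ub_le_sup (dnorm_set_ubound hf)); exists (`|z|^-1 *: z) => //=.
  by rewrite normrZ (ger0_norm nz') mulVf ?gt_eqF.
by rewrite dualZ // normrM (ger0_norm nz') mulrC ler_pdivrMr.
Qed.

Lemma dnorm_le f M : 0 <= M -> (forall z, `|f z| <= M * `|z|) -> dnorm f <= M.
Proof.
move=> M0 hM; apply: ge_sup; first by exists `|f 0|, 0 => //=; rewrite normr0.
by move=> _ [x /= hx <-]; apply: le_trans (hM x) _; rewrite ler_piMr.
Qed.

Lemma dual_sphere_le f z : is_dual f -> dnorm f = 1 -> f z <= `|z|.
Proof.
move=> hf f1; rewrite -[`|z|]mul1r -f1.
exact: le_trans (ler_norm _) (dual_normr_le _ hf).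
Qed.

Lemma dnorm_scale_le f (s : R) : is_dual f ->
  dnorm (fun x => s * f x) <= `|s| * dnorm f.
Proof.
move=> hf; apply: dnorm_le; first by rewrite mulr_ge0 // dnorm_ge0.
by move=> z; rewrite normrM -mulrA ler_wpM2l // dual_normr_le.
Qed.

Lemma dnorm_scale f (s : R) : is_dual f ->
  dnorm (fun x => s * f x) = `|s| * dnorm f.
Proof.
move=> hf; apply/le_anti; rewrite dnorm_scale_le //=.
have [->|s0] := eqVneq s 0; first by rewrite normr0 mul0r dnorm_ge0.
have {1}-> : f = (fun x => s^-1 * (s * f x)).
  by apply: funext => x; rewrite mulrA mulVf // mul1r.
rewrite -ler_pdivlMl ?normr_gt0 // -normrV ?unitfE //.
exact/dnorm_scale_le/is_dual_scale.
Qed.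

Lemma dual_sphere_value1 f : is_dual f -> dnorm f = 1 -> exists z, f z = 1.
Proof.
move=> hf f1; have [[z fz]|f0] := pselect (exists z, f z != 0).
  by exists ((f z)^-1 *: z); rewrite dualZ // mulVf.
suff : dnorm f <= 0 by rewrite f1 ler10.
apply: dnorm_le => // z; rewrite mul0r.
have [->|fz] := eqVneq (f z) 0; first by rewrite normr0.
by case: f0; exists z.
Qed.

Lemma uniformly_convex_mid_eq u v : uniformly_convex X -> `|u| = `|v| ->
  `|(2 : R)^-1 *: (u + v)| = `|u| -> u = v.
Proof.
move=> uc uv mid; apply/eqP/negPn/negP => neq_uv.
have [u0|u0] := eqVneq u 0.
  by move: uv neq_uv; rewrite u0 normr0 => /esym/normr0_eq0 ->; rewrite eqxx.
have nu : 0 < `|u| by rewrite normr_gt0.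
pose r := `|u|^-1.
have r0 : 0 < r by rewrite invr_gt0.
have ru : `|r *: u| = 1 by rewrite normrZ gtr0_norm // mulVf ?gt_eqF.
have rv : `|r *: v| = 1 by rewrite normrZ gtr0_norm // -uv mulVf ?gt_eqF.
have eps0 : 0 < `|r *: u - r *: v|.
  by rewrite -scalerBr normrZ gtr0_norm // mulr_gt0 // normr_gt0 subr_eq0.
have eps2 : `|r *: u - r *: v| <= 2.
  by apply: le_trans (ler_normB _ _) _; rewrite ru rv.
have /uc [d d0 hd] : 0 < `|r *: u - r *: v| <= 2 by rewrite eps0 eps2.
move: (hd (r *: u) (r *: v)); rewrite ru rv lexx => /(_ isT isT (lexx _)).
rewrite -scalerDr scalerA mulrC -scalerA normrZ gtr0_norm // mid mulVf ?gt_eqF //.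
lra.
Qed.

(** * A Farkas lemma for two functionals *)

Lemma dual_sphere_indep a b : is_dual a -> is_dual b ->
  dnorm a = 1 -> dnorm b = 1 -> b <> a -> b <> (fun x => - a x) ->
  exists q, a q = 0 /\ b q != 0.
Proof.
move=> ha hb a1 b1 ba bNa.
have [//|indep] := pselect (exists q, a q = 0 /\ b q != 0); exfalso.
have [pa apa] := dual_sphere_value1 ha a1.
have eb : b = (fun x => b pa * a x).
  apply: funext => z; pose w := z - a z *: pa.
  have aw : a w = 0 by rewrite dualB // dualZ // apa mulr1 subrr.
  have : b w = 0 by apply: contrapT => /eqP bw; apply: indep; exists w.
  by move/eqP; rewrite dualB // dualZ // subr_eq0 mulrC => /eqP.
move: (dnorm_scale (b pa) ha); rewrite -eb b1 a1 mulr1.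
case: (ger0P (b pa)) => _ hn.
  by apply: ba; rewrite eb -hn; apply: funext => x; rewrite mul1r.
by apply: bNa; rewrite eb -(opprK (b pa)) -hn; apply: funext => x; rewrite mulN1r.
Qed.

Lemma two_functional_farkas a b p : is_dual a -> is_dual b ->
  dnorm a = 1 -> dnorm b = 1 -> b <> a -> b <> (fun x => - a x) -> is_dual p ->
  (forall k, a k <= 0 -> b k <= 0 -> p k <= 0) ->
  exists lam mu : R,
    [/\ 0 <= lam, 0 <= mu & forall z, p z = lam * a z + mu * b z].
Proof.
move=> ha hb a1 b1 ba bNa hp pW.
(* [u, v] is the basis dual to [a, b]; [p] vanishes on [ker a :&: ker b]
   because both [w] and [- w] lie in the cone [a <= 0, b <= 0]. *)
have [pa apa] := dual_sphere_value1 ha a1.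
have [q [aq bq]] := dual_sphere_indep ha hb a1 b1 ba bNa.
have [v [av bv]] : exists v, a v = 0 /\ b v = 1.
  by exists ((b q)^-1 *: q); rewrite !dualZ // aq mulr0 mulVf.
have [u [au bu]] : exists u, a u = 1 /\ b u = 0.
  exists (pa - b pa *: v).
  by rewrite !dualB // !dualZ // av bv apa mulr0 subr0 mulr1 subrr.
have p_ker k : a k = 0 -> b k = 0 -> p k = 0.
  move=> ak bk; apply/le_anti; rewrite pW ?ak ?bk //= -oppr_le0 -dualN //.
  by rewrite pW // dualN // ?ak ?bk oppr0.
exists (p u), (p v); split.
- by rewrite -oppr_le0 -dualN // pW // dualN // ?au ?bu ?ler0N1 ?oppr0.
- by rewrite -oppr_le0 -dualN // pW // dualN // ?av ?bv ?ler0N1 ?oppr0.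
move=> z; pose w := z - a z *: u - b z *: v.
have aw : a w = 0 by rewrite !dualB // !dualZ // au av; ring.
have bw : b w = 0 by rewrite !dualB // !dualZ // bu bv; ring.
move: (p_ker w aw bw); rewrite !dualB // !dualZ // => pw.
rewrite (mulrC (p u)) (mulrC (p v)); lra.
Qed.

(** * One-sided derivative of the norm *)

(* [norm_deriv x h] is the right derivative of the norm at [x] in direction
   [h]; by convexity the quotients decrease as [s] decreases, so it is
   their infimum. *)
Definition norm_quot x h (s : R) := (`|x + s *: h| - `|x|) / s.
Definition norm_deriv x h := inf [set norm_quot x h s | s in [set s : R | 0 < s]].

Lemma norm_quot_ge x h s : 0 < s -> - `|h| <= norm_quot x h s.
Proof.
move=> s0; rewrite /norm_quot ler_pdivlMr //.
have := ler_normD (x + s *: h) (- (s *: h)).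
rewrite addrK normrN normrZ gtr0_norm // mulNr (mulrC _ s); lra.
Qed.

Lemma norm_quot_le x h s : 0 < s -> norm_quot x h s <= `|h|.
Proof.
move=> s0; rewrite /norm_quot ler_pdivrMr //.
have := ler_normD x (s *: h); rewrite normrZ gtr0_norm // (mulrC _ s); lra.
Qed.

Lemma norm_quot_mono x h s t : 0 < s -> s <= t -> norm_quot x h s <= norm_quot x h t.
Proof.
move=> s0 st; have t0 : 0 < t by apply: lt_le_trans st.
have k0 : 0 <= s / t by rewrite divr_ge0 // ltW.
have k1 : 0 <= 1 - s / t by rewrite subr_ge0 ler_pdivrMr // mul1r.
have e : x + s *: h = (1 - s / t) *: x + (s / t) *: (x + t *: h).
  by rewrite scalerDr scalerA divfK ?gt_eqF // scalerBl scale1r addrA subrK.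
move: (ler_normD ((1 - s / t) *: x) ((s / t) *: (x + t *: h))).
rewrite -e (normrZ (1 - s / t)) (normrZ (s / t)) (ger0_norm k0) (ger0_norm k1) => H.
rewrite /norm_quot ler_pdivrMr // mulrAC ler_pdivlMr //.
have H2 : `|x + s *: h| - `|x| <= s / t * (`|x + t *: h| - `|x|) by lra.
move: H2; rewrite -ler_pdivlMr // => H2.
by apply: le_trans H2 _; rewrite mulrC mulrA.
Qed.

Lemma norm_deriv_le x h s : 0 < s -> norm_deriv x h <= norm_quot x h s.
Proof.
move=> s0; apply: ge_inf; last by exists s.
by exists (- `|h|) => _ [t t0 <-]; exact: norm_quot_ge.
Qed.

Lemma norm_deriv_ge x h m : (forall s, 0 < s -> m <= norm_quot x h s) ->
  m <= norm_deriv x h.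
Proof.
move=> H; apply: lb_le_inf; first by exists (norm_quot x h 1), 1 => //=.
by move=> _ [s s0 <-]; exact: H.
Qed.

Lemma norm_deriv_approx x h e : 0 < e -> exists2 s, 0 < s &
  forall s', 0 < s' -> s' <= s -> norm_quot x h s' < norm_deriv x h + e.
Proof.
move=> e0; case: (@inf_lt _ [set norm_quot x h s | s in [set s : R | 0 < s]]
    (norm_deriv x h + e)); first by exists (norm_quot x h 1), 1 => //=.
  by rewrite ltrDl.
move=> _ [s s0 <-] hs; exists s => // s' s'0 s's.
exact: le_lt_trans (norm_quot_mono _ _ s'0 s's) hs.
Qed.

Lemma norm_quot_add x h1 h2 s : 0 < s ->
  norm_quot x (h1 + h2) s <= norm_quot x h1 (2 * s) + norm_quot x h2 (2 * s).
Proof.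
move=> s0; have i2 : 0 <= (2 : R)^-1 by rewrite invr_ge0 ler0n.
rewrite /norm_quot; have -> : x + s *: (h1 + h2) =
    (2 : R)^-1 *: (x + (2 * s) *: h1) + (2 : R)^-1 *: (x + (2 * s) *: h2).
  rewrite !scalerDr !scalerA mulrA mulVf ?pnatr_eq0 // mul1r addrACA -scalerDl.
  by rewrite [(2 : R)^-1 + 2^-1](_ : _ = 1) ?scale1r //; field.
move: (ler_normD ((2 : R)^-1 *: (x + (2 * s) *: h1)) (2^-1 *: (x + (2 * s) *: h2))).
rewrite (normrZ 2^-1) (normrZ 2^-1) (ger0_norm i2).
set A := `|x + _ *: h1|; set B := `|x + _ *: h2|; set C := `|_ + _|.
have -> : (A - `|x|) / (2 * s) + (B - `|x|) / (2 * s) = (2^-1 * A + 2^-1 * B - `|x|) / s.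
  by field; rewrite gt_eqF.
by move=> H; apply: ler_wpM2r; [rewrite invr_ge0 ltW | lra].
Qed.

Lemma norm_deriv_subadd x h1 h2 :
  norm_deriv x (h1 + h2) <= norm_deriv x h1 + norm_deriv x h2.
Proof.
apply/ler_addgt0Pr => e e0; have e2 : 0 < e / 2 by rewrite divr_gt0.
have [s1 s10 H1] := norm_deriv_approx x h1 e2.
have [s2 s20 H2] := norm_deriv_approx x h2 e2.
pose m := Num.min s1 s2.
have m0 : 0 < m by rewrite lt_min s10 s20.
have m2 : 0 < m / 2 by rewrite divr_gt0.
apply: le_trans (norm_deriv_le _ _ m2) _; apply: le_trans (norm_quot_add _ _ _ m2) _.
rewrite mulrC divfK ?pnatr_eq0 //.
have ms1 : m <= s1 by rewrite ge_min lexx.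
have ms2 : m <= s2 by rewrite ge_min lexx orbT.
move: (H1 m m0 ms1) (H2 m m0 ms2); lra.
Qed.

Lemma norm_deriv0 x : norm_deriv x 0 = 0.
Proof.
have Q0 s : 0 < s -> norm_quot x 0 s = 0.
  by move=> s0; rewrite /norm_quot scaler0 addr0 subrr mul0r.
apply/le_anti; rewrite -{1}(Q0 1 ltr01) norm_deriv_le //=.
by apply: norm_deriv_ge => s s0; rewrite Q0.
Qed.

Lemma norm_deriv_le_norm x h : norm_deriv x h <= `|h|.
Proof. exact: le_trans (norm_deriv_le x h ltr01) (norm_quot_le x h ltr01). Qed.

Lemma norm_deriv_self x : norm_deriv x x = `|x|.
Proof.
have Qx s : 0 < s -> norm_quot x x s = `|x|.
  move=> s0; rewrite /norm_quot -{1}(scale1r x) -scalerDl normrZ ger0_norm.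
    by field; rewrite gt_eqF.
  by rewrite addr_ge0 // ltW.
apply/le_anti; rewrite -{1}(Qx 1 ltr01) norm_deriv_le //=.
by apply: norm_deriv_ge => s s0; rewrite Qx.
Qed.

Lemma norm_deriv_scale_pos x h (r : R) : 0 < r ->
  norm_deriv x (r *: h) = r * norm_deriv x h.
Proof.
have scale_ge r' h' : 0 < r' -> r' * norm_deriv x h' <= norm_deriv x (r' *: h').
  move=> r0; apply: norm_deriv_ge => s s0.
  have -> : norm_quot x (r' *: h') s = r' * norm_quot x h' (s * r').
    by rewrite /norm_quot scalerA; field; rewrite !gt_eqF.
  by apply: ler_wpM2l; [exact: ltW | apply: norm_deriv_le; exact: mulr_gt0].
move=> r0; apply/le_anti; rewrite scale_ge // andbT.
have ri : 0 < r^-1 by rewrite invr_gt0.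
move: (scale_ge _ (r *: h) ri); rewrite scalerA mulVf ?gt_eqF // scale1r.
by rewrite ler_pdivrMl.
Qed.

Lemma smooth_modulus_ge u w : `|u| = 1 ->
  (`|u + w| + `|u - w|) / 2 - 1 <= smooth_modulus X `|w|.
Proof.
move=> u1; apply: ub_le_sup; last by exists (u, w).
exists `|w| => _ [[p1 p2] /= [n1 n2] <-].
have := ler_normD p1 p2; have := ler_normB p1 p2; rewrite n1 n2 => h1 h2.
rewrite lerBlDr ler_pdivrMr ?ltr0n //; lra.
Qed.

(* Uniform smoothness bounds the sum of the two quotients at step [s] by
   [2 |x| rho(s |h| / |x|) / s], which is [o(1)]. *)
Lemma norm_deriv_add_opp_le0 x h : uniformly_smooth X -> x != 0 ->
  norm_deriv x h + norm_deriv x (- h) <= 0.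
Proof.
move=> us x0; apply/ler_addgt0Pr => e e0; rewrite add0r.
have [->|h0] := eqVneq h 0; first by rewrite oppr0 norm_deriv0 addr0 ltW.
pose r := `|x|; pose nh := `|h|.
have r0 : 0 < r by rewrite normr_gt0.
have nh0 : 0 < nh by rewrite normr_gt0.
pose e' := e / (2 * nh).
have e'0 : 0 < e' by rewrite divr_gt0 // mulr_gt0.
move/cvgr_dist_lt: us => /(_ _ e'0) us.
have [t [t0]] := filter_ex (filterI (nbhs_right_gt (0 : R)) us).
rewrite sub0r normrN => /(le_lt_trans (ler_norm _)); rewrite ltr_pdivrMr // => rho_t.
pose s := t * r / nh.
have s0 : 0 < s by rewrite divr_gt0 // mulr_gt0.
have u1 : `|r^-1 *: x| = 1.
  by rewrite normrZ ger0_norm ?mulVf ?gt_eqF // invr_ge0 ltW.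
have wt : `|(s / r) *: h| = t.
  by rewrite normrZ (gtr0_norm (divr_gt0 s0 r0)) /s -/nh; field; rewrite !gt_eqF.
have uw1 : r^-1 *: x + (s / r) *: h = r^-1 *: (x + s *: h).
  by rewrite scalerDr scalerA mulrC.
have uw2 : r^-1 *: x - (s / r) *: h = r^-1 *: (x + s *: (- h)).
  by rewrite scalerDr scalerA scalerN mulrC.
move: (smooth_modulus_ge ((s / r) *: h) u1).
have ri : 0 <= r^-1 by rewrite invr_ge0 ltW.
rewrite wt uw1 uw2 !normrZ (ger0_norm ri).
set A := `|x + s *: h|; set B := `|x + s *: (- h)| => sm.
apply: le_trans (lerD (norm_deriv_le x h s0) (norm_deriv_le x (- h) s0)) _.
have -> : norm_quot x h s + norm_quot x (- h) s =
    2 * r * ((r^-1 * A + r^-1 * B) / 2 - 1) / s.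
  by rewrite /norm_quot -/A -/B -/r; field; rewrite !gt_eqF.
rewrite ler_pdivrMr //; apply: le_trans (ler_wpM2l _ sm) _.
  by rewrite mulr_ge0 // ltW.
have -> : e * s = 2 * r * (e' * t) by rewrite /e' /s; field; rewrite !gt_eqF.
by rewrite ler_pM2l ?mulr_gt0 // ltW.
Qed.

Section SmoothPoint.
Variable x : X.
Hypotheses (us : uniformly_smooth X) (x0 : x != 0).

Lemma norm_derivN h : norm_deriv x (- h) = - norm_deriv x h.
Proof.
apply/eqP; rewrite -subr_eq0 opprK addrC; apply/eqP/le_anti.
rewrite norm_deriv_add_opp_le0 //=.
by move: (norm_deriv_subadd x h (- h)); rewrite subrr norm_deriv0.
Qed.

Lemma norm_derivD h1 h2 : norm_deriv x (h1 + h2) = norm_deriv x h1 + norm_deriv x h2.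
Proof.
apply/le_anti; rewrite norm_deriv_subadd /=.
by move: (norm_deriv_subadd x (h1 + h2) (- h2)); rewrite addrK norm_derivN lerBrDr.
Qed.

Lemma norm_derivZ (r : R) h : norm_deriv x (r *: h) = r * norm_deriv x h.
Proof.
case: (ltrgt0P r) => [r0|r0|->]; first exact: norm_deriv_scale_pos.
- have /(norm_deriv_scale_pos x h) : 0 < - r by rewrite oppr_gt0.
  by rewrite scaleNr norm_derivN mulNr => /eqP; rewrite eqr_opp => /eqP.
- by rewrite scale0r norm_deriv0 mul0r.
Qed.

Lemma norm_deriv_normr_le h : `|norm_deriv x h| <= `|h|.
Proof.
rewrite ler_norml norm_deriv_le_norm andbT.
by move: (norm_deriv_le_norm x (- h)); rewrite norm_derivN normrN lerNl.
Qed.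

Lemma norm_deriv_dual : is_dual (norm_deriv x).
Proof.
split; [exact: norm_derivD | exact: norm_derivZ | move=> z].
apply/cvgrPdist_lt => e e0; near=> w.
rewrite -norm_derivN -norm_derivD.
apply: le_lt_trans (norm_deriv_normr_le _) _.
near: w; exact: cvgr_dist_lt cvg_id _ e0.
Unshelve. all: by end_near.
Qed.

Lemma norm_deriv_dnorm : dnorm (norm_deriv x) = 1.
Proof.
have nx : 0 < `|x| by rewrite normr_gt0.
apply/le_anti; apply/andP; split.
  by apply: dnorm_le => // z; rewrite mul1r norm_deriv_normr_le.
rewrite -(ler_pM2r nx) mul1r -{1}norm_deriv_self.
exact: le_trans (ler_norm _) (dual_normr_le _ norm_deriv_dual).
Qed.

Lemma norm_deriv_le0 k : (forall s, 0 < s -> `|x| <= `|x - s *: k|) ->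
  norm_deriv x k <= 0.
Proof.
move=> H; rewrite -oppr_ge0 -norm_derivN; apply: norm_deriv_ge => s s0.
by rewrite /norm_quot scalerN divr_ge0 ?subr_ge0 ?H // ltW.
Qed.

End SmoothPoint.

(** * Norm attainment in uniformly convex spaces *)

Lemma natS_inv_lt (d : R) : 0 < d -> exists N : nat, N.+1%:R^-1 < d.
Proof.
move=> d0; exists (Num.truncn d^-1).
by rewrite -ltf_pV2 ?(posrE, divr_gt0) // ?invrK ?truncnS_gt // invr_gt0.
Qed.

Lemma natS_inv_le (n m : nat) : (n <= m)%N -> m.+1%:R^-1 <= n.+1%:R^-1 :> R.
Proof. by move=> nm; rewrite lef_pV2 ?posrE // ler_nat ltnS. Qed.

Section Attainment.
Variable a : X -> R.
Hypotheses (uc : uniformly_convex X) (ha : is_dual a) (a1 : dnorm a = 1).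

Lemma dual_almost_attains n : exists z, `|z| <= 1 /\ 1 - n.+1%:R^-1 < a z.
Proof.
have : 1 - n.+1%:R^-1 < sup (dnorm_set a).
  by rewrite -[sup _]/(dnorm a) a1 ltrBlDr ltrDl invr_gt0 ltr0Sn.
case/sup_gt; first by exists `|a 0|, 0 => //=; rewrite normr0.
move=> _ [z /= z1 <-]; case: (ger0P (a z)) => az.
  by exists z; split => //; rewrite -(ger0_norm az).
by exists (- z); split; rewrite ?normrN // dualN // -(ltr0_norm az).
Qed.

(* Two terms that are [eps] apart have a midpoint of norm at most [1 - d],
   while [a] is close to [1] at that midpoint. *)
Lemma maximizing_seq_cvg (u : nat -> X) :
  (forall n, `|u n| <= 1 /\ 1 - n.+1%:R^-1 < a (u n)) -> cvg (u @ \oo).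
Proof.
move=> hu; apply: cauchy_cvg; apply: cauchy_exP => e e0.
pose eps := Num.min e 2.
have eps0 : 0 < eps by rewrite lt_min e0 ltr0n.
have /uc [d d0 hd] : 0 < eps <= 2 by rewrite eps0 ge_min lexx orbT.
have [N hN] := natS_inv_lt d0.
exists (u N), N => // m /= Nm; rewrite -ball_normE /ball_ /=.
apply: (@lt_le_trans _ _ eps); last by rewrite ge_min lexx.
rewrite ltNge; apply/negP => far.
have [uN1 auN] := hu N; have [um1 aum] := hu m.
move: (hd _ _ uN1 um1 far) (dual_sphere_le (2^-1 *: (u N + u m)) ha a1).
rewrite [a _]dualZ // [a _]dualD // => mid amid.
move: (natS_inv_le Nm) hN auN aum mid amid.
move: (N.+1%:R^-1 : R) (m.+1%:R^-1 : R) => p q; lra.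
Qed.

Lemma dual_attains_norm : exists y, `|y| = 1 /\ a y = 1.
Proof.
have /choice [u hu] := dual_almost_attains.
have hl : u @ \oo --> lim (u @ \oo) := maximizing_seq_cvg hu.
set l := lim _ in hl.
have l1 : `|l| <= 1.
  by apply: (ler_cvg_to (cvg_norm hl) (cvg_cst (1 : R))); apply: nearW => n; case: (hu n).
have al : 1 <= a l.
  apply/ler_addgt0Pr => e e0; rewrite -lerBlDr.
  have [_ _ /(_ l) ca] := ha.
  apply: (ler_cvg_to (cvg_cst _) (cvg_comp _ _ hl ca)).
  have [N hN] := natS_inv_lt e0.
  exists N => // n /= Nn; apply: ltW; apply: le_lt_trans (hu n).2.
  rewrite lerD2l lerN2; apply: ltW; apply: le_lt_trans hN.
  exact: natS_inv_le.
exists l; split; apply/le_anti.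
- by rewrite l1 (le_trans al (dual_sphere_le _ ha a1)).
- by rewrite al (le_trans (dual_sphere_le _ ha a1) l1).
Qed.

End Attainment.

(** * The wedge and its polar *)

Lemma meridian_arc_comb a b p (lam mu : R) : 0 <= lam -> 0 <= mu ->
  (lam, mu) != (0, 0) -> (forall z, p z = lam * a z + mu * b z) ->
  dnorm p = 1 -> meridian_arc a b p.
Proof.
move=> l0 m0 lm hp p1; exists lam, mu; split => //.
have -> : (fun y => lam * a y + mu * b y) = p by apply: funext => y; rewrite hp.
by rewrite p1; apply: funext => y; rewrite divr1 hp.
Qed.

Lemma meridian_arc_left a b : dnorm a = 1 -> meridian_arc a b a.
Proof.
move=> a1; apply: (@meridian_arc_comb _ _ _ 1 0) => //.
  by rewrite xpair_eqE oner_eq0.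
by move=> z; rewrite mul1r mul0r addr0.
Qed.

Lemma meridian_arc_dual a b c : is_dual a -> is_dual b ->
  meridian_arc a b c -> is_dual c.
Proof. by move=> ha hb [lam [mu [_ _ _ ->]]]; apply: is_dual_comb. Qed.

Lemma wedge0 a b : is_dual a -> is_dual b -> wedge a b 0.
Proof. by move=> ha hb c hc; rewrite (dual0 (meridian_arc_dual ha hb hc)). Qed.

Lemma wedgeZ a b k (s : R) : is_dual a -> is_dual b ->
  wedge a b k -> 0 <= s -> wedge a b (s *: k).
Proof.
move=> ha hb hk s0 c hc; rewrite (dualZ _ _ (meridian_arc_dual ha hb hc)).
by rewrite mulr_ge0_le0 // hk.
Qed.

Lemma wedge_of_le0 a b k : a k <= 0 -> b k <= 0 -> wedge a b k.
Proof.
move=> ak bk c [lam [mu [l0 m0 _ ->]]].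
rewrite mulr_le0_ge0 ?invr_ge0 ?dnorm_ge0 //.
by rewrite -oppr_ge0 opprD addr_ge0 // -mulrN mulr_ge0 // oppr_ge0.
Qed.

Lemma duality_unit c y : is_dual c -> dnorm c = 1 -> `|y| = 1 -> c y = 1 ->
  duality y c.
Proof. by move=> hc c1 y1 cy; split; rewrite ?c1 ?y1 ?mulr1 ?expr1n. Qed.

Lemma duality_normr_le c y k (t : R) : duality y c -> 0 <= t -> c k <= 0 ->
  `|t *: y| <= `|t *: y - k|.
Proof.
move=> [hc cy cyy yc] t0 ck; have [->|y0] := eqVneq y 0.
  by rewrite scaler0 normr0.
have ny : 0 < `|y| by rewrite normr_gt0.
have cn : dnorm c = `|y| by apply: (mulIf (negbT (gt_eqF ny))); rewrite cyy expr2.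
have := dual_normr_le (t *: y - k) hc; rewrite cn dualB // dualZ // cy cn.
move=> H; rewrite -(ler_pM2l ny) normrZ ger0_norm //.
by apply: le_trans (le_trans (ler_norm _) H); rewrite mulrCA lerDl oppr_ge0.
Qed.

Lemma polar_normr_le (K : set X) x k : polar K x -> K k -> `|x| <= `|x - k|.
Proof.
move=> hx Kk; have : metric_proj K x 0 by rewrite hx.
by case=> _ /(_ k Kk); rewrite subr0.
Qed.

(* If [k] were another nearest point, the midpoint [x - k / 2] of [x] and
   [x - k] would be no closer, against strict convexity. *)
Lemma polar_of_normr_le (K : set X) x : uniformly_convex X -> K 0 ->
  (forall k (s : R), K k -> 0 <= s -> K (s *: k)) ->
  (forall k, K k -> `|x| <= `|x - k|) -> polar K x.
Proof.
move=> uc K0 KZ xmin; apply/seteqP; split => k /=; last first.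
  by move=> ->; split=> // k' /xmin; rewrite subr0.
case=> Kk kmin; have i2 : 0 <= (2 : R)^-1 by rewrite invr_ge0 ler0n.
have xk : `|x| = `|x - k|.
  by apply/le_anti; rewrite xmin //; move: (kmin 0 K0); rewrite subr0.
have mid : x - 2^-1 *: k = 2^-1 *: (x + (x - k)).
  rewrite scalerDr scalerBr addrA -scalerDl [(2 : R)^-1 + 2^-1](_ : _ = 1) ?scale1r //.
  by field.
have mid_norm : `|(2 : R)^-1 *: (x + (x - k))| = `|x|.
  apply/le_anti/andP; split; last by rewrite -mid; apply/xmin/KZ.
  rewrite normrZ ger0_norm // ler_pdivrMl ?ltr0n //.
  by move: (ler_normD x (x - k)); rewrite -xk; lra.
move: (uniformly_convex_mid_eq uc xk mid_norm).
by move/(congr1 (fun y => x - y)); rewrite subrr opprB addrC subrK => <-.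
Qed.

Lemma polar_wedge_Jinv a b c y (t : R) : uniformly_convex X ->
  is_dual a -> is_dual b -> meridian_arc a b c -> duality y c -> 0 <= t ->
  polar (wedge a b) (t *: y).
Proof.
move=> uc ha hb hc hy t0; apply: polar_of_normr_le => //.
- exact: wedge0.
- by move=> k s hk; apply: wedgeZ.
- by move=> k hk; apply: duality_normr_le hy t0 (hk c hc).
Qed.

Lemma polar_wedge_sub a b x : uniformly_convex X -> uniformly_smooth X ->
  dual_sphere a -> dual_sphere b -> b <> a -> b <> (fun x => - a x) ->
  polar (wedge a b) x ->
  exists2 c, meridian_arc a b c &
    exists t : R, exists y : X, [/\ 0 <= t, Jinv_set c y & x = t *: y].
Proof.
move=> uc us [ha a1] [hb b1] ba bNa hx.
have [->|x0] := eqVneq x 0.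
  have [y [y1 ay]] := dual_attains_norm uc ha a1.
  exists a; first exact: meridian_arc_left.
  by exists 0, y; split; rewrite ?scale0r //; apply: duality_unit.
have pW k : a k <= 0 -> b k <= 0 -> norm_deriv x k <= 0.
  move=> ak bk; apply: (norm_deriv_le0 us x0) => s s0.
  exact/(polar_normr_le hx)/wedgeZ/ltW/s0/wedge_of_le0.
have [lam [mu [l0 m0 hp]]] :=
  two_functional_farkas ha hb a1 b1 ba bNa (norm_deriv_dual us x0) pW.
have nx : 0 < `|x| by rewrite normr_gt0.
have lm : (lam, mu) != (0, 0).
  rewrite xpair_eqE; apply/negP => /andP [/eqP l00 /eqP m00].
  move: (norm_deriv_self x); rewrite hp l00 m00 !mul0r addr0 => /esym/eqP.
  by rewrite normr_eq0 (negbTE x0).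
exists (norm_deriv x).
  exact: meridian_arc_comb l0 m0 lm hp (norm_deriv_dnorm us x0).
exists `|x|, (`|x|^-1 *: x); split; first exact: ltW.
- apply: duality_unit (norm_deriv_dual us x0) (norm_deriv_dnorm us x0) _ _.
    by rewrite normrZ ger0_norm ?mulVf ?gt_eqF // invr_ge0 ltW.
  by rewrite norm_derivZ // norm_deriv_self mulVf ?gt_eqF.
- by rewrite scalerA mulfV ?gt_eqF // scale1r.
Qed.

End Banach.

Theorem mainTheorem5 (R : realType) (X : completeNormedModType R)
  (a b : X -> R) :
  uniformly_convex X -> uniformly_smooth X ->
  dual_sphere a -> dual_sphere b -> b <> a -> b <> (fun x => - a x) ->
  polar (wedge a b) =
    \bigcup_(c in meridian_arc a b) [set z | exists t : R, exists y : X, [/\ 0 <= t, Jinv_set c y & z = t *: y]]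
  /\ polar (wedge a b) = cone (\bigcup_(c in meridian_arc a b) Jinv_set c).
Proof.
move=> uc us sa sb ba bNa.
have polarE : polar (wedge a b) =
    \bigcup_(c in meridian_arc a b) [set z | exists t : R, exists y : X, [/\ 0 <= t, Jinv_set c y & z = t *: y]].
  apply/seteqP; split => x; first exact: polar_wedge_sub.
  case: sa sb => ha _ [hb _] [c hc [t [y [t0 hy ->]]]].
  exact: polar_wedge_Jinv hc hy t0.
split => //; rewrite polarE; apply/seteqP; split => x /=.
  by move=> [c hc [t [y [t0 hy ->]]]]; exists t, y; split => //; exists c.
by move=> [t [y [t0 [c hc hy] ->]]]; exists c => //; exists t, y.
Qed.
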